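(* Let $H$ be obtained from $F_4$ by adding a new vertex and joining it to four distinct vertices of $F_4$. Then $H$ contains $K_{3,4}$ as a minor.
   Context: $F_4$ is the graph with vertex set $\{f^1,f^2\}\cup\{f^i_j: i\in\{1,2\}, j\in\{1,2,3,4\}\}$ and the 16 edges: for each $i\in\{1,2\}$, $f^if^i_1$, $f^if^i_2$, $f^if^i_4$, $f^i_3f^i_1$, $f^i_3f^i_2$, $f^i_3f^i_4$; and $f^1_jf^2_{5-j}$ for $j=1,2,3,4$. *)

From mathcomp Require Import all_boot.
Set Implicit Arguments. Unset Strict Implicit. Unset Printing Implicit Defensive.

(* A (simple) graph is a relation e on a finType; we only use symmetric ones. *)

Definition connected_in (T : finType) (e : rel T) (X : {set T}) : Prop :=
  forall x y, x \in X -> y \in X ->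
    connect [rel u v | [&& e u v, u \in X & v \in X]] x y.

Definition has_minor (T : finType) (e : rel T) (T' : finType) (e' : rel T') : Prop :=
  exists phi : T' -> {set T},
    [/\ forall u, phi u != set0,
        forall u v, u != v -> [disjoint phi u & phi v],
        forall u, connected_in e (phi u)
      & forall u v, e' u v -> exists x y, [/\ x \in phi u, y \in phi v & e x y]].

Definition Kmn_vert (m n : nat) : finType := ('I_m + 'I_n)%type.
Definition Kmn_rel (m n : nat) : rel (Kmn_vert m n) :=
  fun u v => match u, v with
             | inl _, inr _ | inr _, inl _ => true
             | _, _ => false
             end.

(* Vertices encoded in 'I_10:  f^i = i-1 (i=1,2),  f^i_j = 2 + 4(i-1) + (j-1). *)
Definition fv (i : nat) : nat := i.-1.
Definition fvj (i j : nat) : nat := 2 + 4 * i.-1 + j.-1.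

Definition F4_edges : seq (nat * nat) :=
  flatten [seq [:: (fv i, fvj i 1); (fv i, fvj i 2); (fv i, fvj i 4);
                   (fvj i 3, fvj i 1); (fvj i 3, fvj i 2); (fvj i 3, fvj i 4)]
          | i <- [:: 1; 2]]
  ++ [seq (fvj 1 j, fvj 2 (5 - j)) | j <- [:: 1; 2; 3; 4]].

Definition F4_rel : rel 'I_10 :=
  fun x y => ((nat_of_ord x, nat_of_ord y) \in F4_edges)
             || ((nat_of_ord y, nat_of_ord x) \in F4_edges).

(* H = F_4 plus a new vertex (None) joined to the vertices of S. *)
Definition H_rel (S : {set 'I_10}) : rel (option 'I_10) :=
  fun u v => match u, v with
             | Some x, Some y => F4_rel x y
             | None, Some y => y \in S
             | Some x, None => x \in S
             | None, None => false
             end.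
Arguments Kmn_rel : clear implicits.

From mathcomp Require Import all_boot.
Set Implicit Arguments. Unset Strict Implicit. Unset Printing Implicit Defensive.

(* A K_{3,4}-minor model is exhibited explicitly for each of the 210 possible
   neighbourhoods S of the new vertex; 20 models suffice.  Each model is
   certified by a boolean check in which connectivity of a branch set is
   witnessed by an ordering of it in which every vertex is adjacent to an
   earlier one, so that the whole case analysis is a single computation. *)

Lemma has_minor_eq (T T' : finType) (e1 e2 : rel T) (e' : rel T') :
  e1 =2 e2 -> has_minor e1 e' -> has_minor e2 e'.
Proof.
move=> e12 [phi [ne disj conn adj]]; exists phi; split=> // [w x y xw yw|u v].
- set R1 := [rel a b | [&& e1 a b, a \in phi w & b \in phi w]].
  by rewrite -(eq_connect (e := R1)) ?conn // => a b /=; rewrite e12.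
- by case/adj=> x [y [xu yv xy]]; exists x, y; rewrite -e12.
Qed.

Section KmnModel.
Variables (T : finType) (e : rel T).
Hypothesis e_sym : symmetric e.

Fixpoint connected_ordering_from (pre s : seq T) : bool :=
  if s is y :: s' then has (e y) pre && connected_ordering_from (y :: pre) s' else true.

Definition connected_ordering (s : seq T) : bool :=
  if s is x :: s' then connected_ordering_from [:: x] s' else false.

Section Reach.
Variables (X : {set T}) (x : T).
Let R := [rel u v | [&& e u v, u \in X & v \in X]].

Lemma connected_ordering_from_reach pre s :
  connected_ordering_from pre s -> {subset pre ++ s <= X} ->
  {in pre, forall y, connect R x y} -> {in s, forall y, connect R x y}.
Proof.
elim: s pre => [//|y s IH] pre /= /andP[/hasP[z zpre yz] ord_s] sub reach_pre.
have reach_y : connect R x y.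
  apply: connect_trans (reach_pre z zpre) (connect1 _).
  by rewrite /= e_sym yz !sub // mem_cat ?zpre ?mem_head ?orbT.
move=> w; rewrite inE => /predU1P[-> //|].
apply: (IH (y :: pre) ord_s) => [v|v]; last by rewrite inE => /predU1P[-> //|/reach_pre].
rewrite mem_cat inE -orbA => /or3P[/eqP->|vpre|vs]; apply: sub;
  by rewrite mem_cat inE ?eqxx ?vpre ?vs ?orbT.
Qed.

End Reach.

Lemma connected_ordering_connected s :
  connected_ordering s -> connected_in e [set x in s].
Proof.
case: s => [//|x s] /= ord_s.
set X := [set y in x :: s]; set R := [rel u v | [&& e u v, u \in X & v \in X]].
have R_sym : connect_sym R.
  by apply: sym_connect_sym => u v /=; rewrite e_sym; case: (u \in X) (v \in X) => [] [].
have reach_x : {in x :: s, forall y, connect R x y}.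
  move=> y; rewrite inE => /predU1P[-> //|].
  apply: (connected_ordering_from_reach ord_s) => [v vs|v]; first by rewrite inE.
  by rewrite inE => /eqP->.
move=> y z yX zX; rewrite !inE in yX zX.
by apply: connect_trans (reach_x z zX); rewrite R_sym reach_x.
Qed.

Definition Kmn_model_seqb (A B : seq (seq T)) : bool :=
  [&& all connected_ordering (A ++ B),
      pairwise (fun X Y => ~~ has [in Y] X) (A ++ B)
    & allrel (fun X Y => has (fun x => has (e x) Y) X) A B].

Lemma has_minor_Kmn_model A B :
  Kmn_model_seqb A B -> has_minor e (Kmn_rel (size A) (size B)).
Proof.
case/and3P=> /allP conn_AB /(pairwiseP [::]) disj_AB /allrelP adj_AB.
pose idx (u : Kmn_vert (size A) (size B)) :=
  match u with inl i => val i | inr j => size A + j end.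
pose branch u := nth [::] (A ++ B) (idx u).
have idx_lt u : idx u < size (A ++ B).
  by case: u => [i|j] /=; rewrite size_cat ?ltn_add2l // ltn_addr.
have idx_inj : injective idx.
  case=> [i|j] [i'|j'] /= eq_idx; first by congr inl; apply: val_inj.
  - by have := ltn_ord i; rewrite eq_idx ltnNge leq_addr.
  - by have := ltn_ord i'; rewrite -eq_idx ltnNge leq_addr.
  - by congr inr; apply: val_inj; apply: (addnI eq_idx).
have conn_branch u : connected_ordering (branch u) by apply/conn_AB/mem_nth.
exists (fun u => [set x in branch u]); split.
- move=> u; apply/set0Pn; move: (conn_branch u).
  by case: (branch u) => [//|x s] _; exists x; rewrite inE mem_head.
- move=> u v; rewrite -(inj_eq idx_inj) neq_ltn -setI_eq0.
  wlog lt_uv : u v / idx u < idx v.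
    move=> hwlog /orP[uv|vu]; first by apply: hwlog; rewrite ?uv.
    by rewrite setIC; apply: hwlog; rewrite ?vu ?orbT.
  move=> _; apply/eqP/setP=> x; rewrite !inE; apply/negbTE/andP=> -[xu xv].
  by case/negP: (disj_AB _ _ (idx_lt u) (idx_lt v) lt_uv); apply/hasP; exists x.
- by move=> u; apply: connected_ordering_connected.
- have adj_branch (i : 'I_(size A)) (j : 'I_(size B)) : exists x y,
      [/\ x \in [set x in branch (inl i)], y \in [set y in branch (inr j)] & e x y].
    have /hasP[x xi /hasP[y yj xy]] :=
      adj_AB _ _ (mem_nth [::] (ltn_ord i)) (mem_nth [::] (ltn_ord j)).
    by exists x, y; rewrite !inE /branch /= !nth_cat ltn_ord ltnNge leq_addr addKn.
  case=> [i|j] [i'|j'] //= _.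
  by have [x [y [xi yj xy]]] := adj_branch i' j; exists y, x; rewrite e_sym.
Qed.

End KmnModel.

Section SubseqsOfSize.
Variable T : eqType.

Fixpoint subseqs_of_size (k : nat) (s : seq T) {struct s} : seq (seq T) :=
  match k, s with
  | 0, _ => [:: [::]]
  | _.+1, [::] => [::]
  | k'.+1, x :: s' => map (cons x) (subseqs_of_size k' s') ++ subseqs_of_size k s'
  end.

Lemma mem_subseqs_of_size s t : subseq t s -> t \in subseqs_of_size (size t) s.
Proof.
elim: s t => [|x s IHs] [|y t] //=.
rewrite mem_cat; case: eqP => [-> /IHs ts|_ /IHs ts]; first by rewrite map_f.
by rewrite ts orbT.
Qed.

End SubseqsOfSize.

Definition apex_rel (T : Type) (e : rel T) (a : pred T) : rel (option T) :=
  fun u v => match u, v with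
             | Some x, Some y => e x y
             | None, Some y => a y
             | Some x, None => a x
             | None, None => false
             end.

Lemma apex_rel_sym (T : Type) (e : rel T) (a : pred T) :
  symmetric e -> symmetric (apex_rel e a).
Proof. by move=> e_sym [x|] [y|] //=; rewrite e_sym. Qed.

Lemma F4_rel_sym : symmetric F4_rel.
Proof. by move=> x y; rewrite /F4_rel orbC. Qed.

Lemma H_rel_apex (S : {set 'I_10}) : apex_rel F4_rel [in enum S] =2 H_rel S.
Proof. by case=> [x|] [y|] //=; rewrite mem_enum. Qed.

(* insub_eq is used instead of insub because it reduces under vm_compute. *)
Definition enum_I10 : seq 'I_10 := pmap (@insub_eq _ _ 'I_10) (iota 0 10).

Lemma enum_I10E : enum_I10 = Finite.enum 'I_10.
Proof. by rewrite unlock; apply: eq_pmap; exact: insub_eqE. Qed.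

(* Vertices are numbered as in the definition of F4_rel; 10 stands for the
   new vertex, which insub_eq maps to None. *)
Definition K34_model_for (s : seq 'I_10) (AB : seq (seq nat) * seq (seq nat)) : bool :=
  let decode := map (map (@insub_eq _ _ 'I_10)) in
  [&& size AB.1 == 3, size AB.2 == 4
    & Kmn_model_seqb (apex_rel F4_rel [in s]) (decode AB.1) (decode AB.2)].

Definition K34_models : seq (seq (seq nat) * seq (seq nat)) := [::
   ([:: [:: 2; 9]; [:: 5; 6]; [:: 3; 4; 7]], [:: [:: 0]; [:: 1]; [:: 8]; [:: 10]]);
   ([:: [:: 0; 2; 9; 1]; [:: 8]; [:: 4; 5]], [:: [:: 3]; [:: 6]; [:: 7]; [:: 10]]);
   ([:: [:: 1; 6]; [:: 0; 3; 8]; [:: 2; 4]], [:: [:: 5]; [:: 7]; [:: 9]; [:: 10]]);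
   ([:: [:: 0; 5]; [:: 1; 7; 4]; [:: 8; 9]], [:: [:: 2]; [:: 3]; [:: 6]; [:: 10]]);
   ([:: [:: 1; 6; 5]; [:: 3; 8]; [:: 2; 10]], [:: [:: 0]; [:: 4]; [:: 7]; [:: 9]]);
   ([:: [:: 0; 2; 9]; [:: 4; 7]; [:: 6; 10]], [:: [:: 1]; [:: 3]; [:: 5]; [:: 8]]);
   ([:: [:: 0; 5; 6]; [:: 4; 7]; [:: 9; 10]], [:: [:: 1]; [:: 2]; [:: 3]; [:: 8]]);
   ([:: [:: 1; 9; 2]; [:: 3; 8]; [:: 5; 10]], [:: [:: 0]; [:: 4]; [:: 6]; [:: 7]]);
   ([:: [:: 0; 5; 6; 1]; [:: 8]; [:: 2; 4]], [:: [:: 3]; [:: 7]; [:: 9]; [:: 10]]);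
   ([:: [:: 0; 3; 8]; [:: 1; 9]; [:: 4; 5]], [:: [:: 2]; [:: 6]; [:: 7]; [:: 10]]);
   ([:: [:: 1; 7; 4]; [:: 0; 2]; [:: 6; 8]], [:: [:: 3]; [:: 5]; [:: 9]; [:: 10]]);
   ([:: [:: 0; 2; 9; 1]; [:: 6; 8]; [:: 4]], [:: [:: 3]; [:: 5]; [:: 7]; [:: 10]]);
   ([:: [:: 0; 5; 6; 1]; [:: 4]; [:: 8; 9]], [:: [:: 2]; [:: 3]; [:: 7]; [:: 10]]);
   ([:: [:: 2; 9]; [:: 5; 6]; [:: 3; 8; 7]], [:: [:: 0]; [:: 1]; [:: 4]; [:: 10]]);
   ([:: [:: 0; 2; 9]; [:: 4; 7]; [:: 6; 8]], [:: [:: 1]; [:: 3]; [:: 5]; [:: 10]]);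
   ([:: [:: 0; 3; 8]; [:: 1; 7; 4]; [:: 10]], [:: [:: 2]; [:: 5]; [:: 6]; [:: 9]]);
   ([:: [:: 2; 9]; [:: 5; 6]; [:: 3; 10]], [:: [:: 0]; [:: 1; 7]; [:: 4]; [:: 8]]);
   ([:: [:: 0; 5; 6]; [:: 4; 7]; [:: 8; 9]], [:: [:: 1]; [:: 2]; [:: 3]; [:: 10]]);
   ([:: [:: 1; 6; 5]; [:: 2; 4]; [:: 3; 8]], [:: [:: 0]; [:: 7]; [:: 9]; [:: 10]]);
   ([:: [:: 1; 9; 2]; [:: 4; 5]; [:: 3; 8]], [:: [:: 0]; [:: 6]; [:: 7]; [:: 10]])].

Lemma K34_models_cover :
  all (fun s => has (K34_model_for s) K34_models) (subseqs_of_size 4 enum_I10).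
Proof. by vm_compute. Qed.

Theorem lemma4p13 (S : {set 'I_10}) :
  #|S| = 4 -> has_minor (H_rel S) (Kmn_rel 3 4).
Proof.
move=> card_S.
have enum_S_sub : enum S \in subseqs_of_size 4 enum_I10.
  rewrite enum_I10E.
  have := mem_subseqs_of_size (filter_subseq (mem S) (Finite.enum 'I_10)).
  by rewrite -cardE card_S.
have /hasP[[A B] _ /and3P[/eqP size_A /eqP size_B model_AB]] :=
  allP K34_models_cover _ enum_S_sub.
apply: (has_minor_eq (H_rel_apex S)).
move: (has_minor_Kmn_model (apex_rel_sym _ F4_rel_sym) model_AB).
by rewrite !size_map size_A size_B.
Qed.
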